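(* Let $n = 2k+1$ be an odd integer and $m = k(2k+1)$. If an edge-coloring of a complete graph contains no rainbow $n$-cycle and no rainbow $m$-cycle, then it contains no rainbow $M$-cycle for every integer $M \ge 4k^3 - 2k^2 - 8k + 8 = n^3/2 - 2n^2 - 3n/2 + 11$.
   Context: A coloring is an arbitrary (not necessarily proper) assignment of colors, from an arbitrary set, to the edges of an undirected complete graph; the graph may be finite or infinite. A rainbow $n$-cycle is a cycle through $n$ distinct vertices whose $n$ edges all receive pairwise distinct colors. *)

From Stdlib Require Import Arith Lia.

(* An edge-coloring of the complete graph on vertex type V (finite or
   infinite) with colors in C: an arbitrary symmetric map on pairs.
   (Values on the diagonal c x x are irrelevant: they are never used.) *)
Definition coloring (V C : Type) (c : V -> V -> C) : Prop :=
  forall x y : V, c x y = c y x.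

Definition rainbow_cycle (V C : Type) (c : V -> V -> C) (n : nat) : Prop :=
  3 <= n /\
  exists v : nat -> V,
    (forall i j, i < n -> j < n -> v i = v j -> i = j) /\
    (forall i j, i < n -> j < n ->
       c (v i) (v ((i + 1) mod n)) = c (v j) (v ((j + 1) mod n)) -> i = j).

(* A chord of a rainbow L-cycle cutting off an a-cycle yields a rainbow
   a-cycle or a rainbow (L+2-a)-cycle.  So if there is no rainbow a-cycle,
   a rainbow cycle of length t + x(a-2) (t >= 3) shrinks to a rainbow t-cycle,
   and forbidding the lengths n and m forbids every length 2 + x(n-2) + y(m-2).
   As m-2 = (k+1)(n-2) - 1, the numbers n-2 and m-2 are coprime, and Sylvester's
   theorem writes every M-2 >= (n-3)(m-3) = 4k^3 - 2k^2 - 8k + 6 in this form. *)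

From Stdlib Require Import Arith Lia Classical.

Definition injective_below {X : Type} (n : nat) (f : nat -> X) : Prop :=
  forall i j, i < n -> j < n -> f i = f j -> i = j.

Lemma injective_below_shift {X : Type} (f : nat -> X) (s n L : nat) :
  injective_below L f -> s + n <= L -> injective_below n (fun i => f (s + i)).
Proof. intros Hf HL i j Hi Hj E. apply Hf in E; lia. Qed.

Lemma injective_below_snoc {X : Type} (f g : nat -> X) (n : nat) :
  injective_below n f -> (forall i, i < n -> f i <> g n) ->
  (forall i, i < n -> g i = f i) -> injective_below (S n) g.
Proof.
  intros Hf Hnew Hg i j Hi Hj E.
  destruct (Nat.eq_dec i n) as [->|Hin], (Nat.eq_dec j n) as [->|Hjn]; auto.
  - rewrite (Hg j) in E by lia. now destruct (Hnew j ltac:(lia)).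
  - rewrite (Hg i) in E by lia. now destruct (Hnew i ltac:(lia)).
  - rewrite (Hg i), (Hg j) in E by lia. apply Hf; auto; lia.
Qed.

Section RainbowCycles.

Variables (V C : Type) (c : V -> V -> C).
Hypothesis c_sym : coloring V C c.

Definition cycle_color (v : nat -> V) (n i : nat) : C := c (v i) (v ((i + 1) mod n)).

Lemma rainbow_cycleE (n : nat) :
  rainbow_cycle V C c n <->
  3 <= n /\ exists v, injective_below n v /\ injective_below n (cycle_color v n).
Proof. reflexivity. Qed.

(* The chord {v (a-1), v 0} cuts the cycle into two arcs.  If its color is new
   on the short arc, the short arc closes into a rainbow a-cycle; otherwise its
   color is used on the short arc only, so the long arc closes into a rainbow
   (L+2-a)-cycle. *)
Lemma rainbow_cycle_chord (L a : nat) :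
  rainbow_cycle V C c L -> 3 <= a -> a < L ->
  rainbow_cycle V C c a \/ rainbow_cycle V C c (L + 2 - a).
Proof.
  rewrite !rainbow_cycleE. intros (HL & v & Hv & He) Ha HaL.
  set (e := cycle_color v L) in He.
  destruct (classic (exists p, p < a - 1 /\ e p = c (v (a - 1)) (v 0)))
    as [(p & Hp & Ep) | Hnew].
  - right. split; [lia|].
    set (w := fun i => v ((a - 1 + i) mod L)).
    assert (Hw : forall i, i < L + 1 - a -> w i = v (a - 1 + i)).
    { intros i Hi. unfold w. now rewrite Nat.mod_small by lia. }
    assert (Hw_last : w (L + 1 - a) = v 0).
    { unfold w. now replace (a - 1 + (L + 1 - a)) with L by lia;
        rewrite Nat.Div0.mod_same. }
    assert (Hlen : L + 2 - a = S (L + 1 - a)) by lia.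
    exists w. rewrite Hlen. split.
    + apply injective_below_snoc with (f := fun i => v (a - 1 + i)).
      * apply (injective_below_shift v _ _ L Hv). lia.
      * intros i Hi E. rewrite Hw_last in E. apply Hv in E; lia.
      * exact Hw.
    + apply injective_below_snoc with (f := fun i => e (a - 1 + i)).
      * apply (injective_below_shift e _ _ L He). lia.
      * intros i Hi E.
        unfold cycle_color in E. rewrite Hw_last, Nat.add_1_r, Nat.Div0.mod_same in E.
        rewrite Hw, Nat.add_0_r, c_sym, <- Ep in E by lia.
        apply He in E; lia.
      * intros i Hi. unfold e, cycle_color.
        rewrite (Nat.mod_small (i + 1)) by lia.
        rewrite Hw by lia. unfold w. now rewrite Nat.add_assoc.
  - left. split; [lia|]. exists v. split.
    + exact (injective_below_shift v 0 a L Hv ltac:(lia)).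
    + assert (Ha1 : a = S (a - 1)) by lia. rewrite Ha1 at 1.
      apply injective_below_snoc with (f := e).
      * exact (injective_below_shift e 0 (a - 1) L He ltac:(lia)).
      * intros i Hi E. apply Hnew. exists i. split; [exact Hi|].
        rewrite E. unfold cycle_color.
        now replace (a - 1 + 1) with a by lia; rewrite Nat.Div0.mod_same.
      * intros i Hi. unfold e, cycle_color. now rewrite !Nat.mod_small by lia.
Qed.

Lemma rainbow_cycle_shorten (a t x : nat) :
  3 <= a -> ~ rainbow_cycle V C c a -> 3 <= t ->
  rainbow_cycle V C c (t + x * (a - 2)) -> rainbow_cycle V C c t.
Proof.
  intros Ha Hna Ht. induction x as [|x IH]; intros H.
  - now rewrite Nat.add_0_r in H.
  - apply IH. rewrite Nat.mul_succ_l in H. set (l := x * (a - 2)) in *.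
    destruct (rainbow_cycle_chord _ a H Ha) as [Hshort | Hlong]; [lia | contradiction |].
    now replace (t + (l + (a - 2)) + 2 - a) with (t + l) in Hlong by lia.
Qed.

Lemma no_rainbow_cycle_combination (a b x y : nat) :
  3 <= a -> 3 <= b -> ~ rainbow_cycle V C c a -> ~ rainbow_cycle V C c b ->
  ~ rainbow_cycle V C c (2 + x * (a - 2) + y * (b - 2)).
Proof.
  intros Ha Hb Hna Hnb H.
  destruct x as [|x]; [destruct y as [|y] |].
  - destruct H. lia.
  - apply Hnb, (rainbow_cycle_shorten b b y Hb Hnb Hb).
    now replace (b + y * (b - 2)) with (2 + 0 * (a - 2) + S y * (b - 2)) by nia.
  - apply Hna, (rainbow_cycle_shorten a a x Ha Hna Ha),
      (rainbow_cycle_shorten b _ y Hb Hnb); [lia |].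
    now replace (a + x * (a - 2) + y * (b - 2)) with (2 + S x * (a - 2) + y * (b - 2)) by nia.
Qed.

End RainbowCycles.

Lemma sylvester_pred_multiple (p d q N : nat) :
  q + 1 = d * p -> (p - 1) * (q - 1) <= N -> exists x y, N = x * p + y * q.
Proof.
  intros Hq HN.
  assert (Hp : p <> 0) by (intros ->; lia).
  pose proof (Nat.div_mod N p Hp) as HNdiv.
  pose proof (Nat.mod_upper_bound N p Hp) as Hr.
  set (Q := N / p) in *. set (r := N mod p) in *. clearbody Q r.
  destruct (Nat.eq_dec r 0) as [-> | Hr0].
  - exists Q, 0. lia.
  - set (s := p - r).
    assert (Hs : s * d <= Q + 1).
    { apply Nat.nlt_ge. intros Hlt.
      assert (p * (Q + 2) <= p * (s * d)) by (apply Nat.mul_le_mono_l; lia).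
      assert (s * q <= (p - 1) * q) by (apply Nat.mul_le_mono_r; lia).
      nia. }
    exists (Q + 1 - s * d), s. nia.
Qed.

Lemma rainbow_length_decomposition (k M : nat) :
  1 <= k -> 4 * k ^ 3 + 8 <= M + 2 * k ^ 2 + 8 * k ->
  exists x y, M = 2 + x * (2 * k + 1 - 2) + y * (k * (2 * k + 1) - 2).
Proof.
  intros Hk HM. destruct k as [|j]; [lia|].
  assert (Hn : 2 * S j + 1 - 2 = 2 * j + 1) by lia.
  assert (Hm : S j * (2 * S j + 1) - 2 = 2 * j * j + 5 * j + 1) by nia.
  rewrite Hn, Hm.
  destruct (sylvester_pred_multiple (2 * j + 1) (j + 2) (2 * j * j + 5 * j + 1) (M - 2))
    as (x & y & E); [nia | simpl in HM; nia |].
  exists x, y. simpl in HM. lia.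
Qed.

Theorem lemma10 (V C : Type) (c : V -> V -> C) (k M : nat) :
  1 <= k ->
  coloring V C c ->
  ~ rainbow_cycle V C c (2 * k + 1) ->
  ~ rainbow_cycle V C c (k * (2 * k + 1)) ->
  4 * k ^ 3 + 8 <= M + 2 * k ^ 2 + 8 * k ->
  ~ rainbow_cycle V C c M.
Proof.
  intros Hk Hc Hn Hm HM.
  destruct (rainbow_length_decomposition k M Hk HM) as (x & y & ->).
  apply no_rainbow_cycle_combination; auto; nia.
Qed.
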